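(* There is a constant $C<\infty$, independent of $m\in(0,1)$ and of $K$, such that for all positive integers $K$ and all $m\in(0,1)$, $$\mathbb{E}\big[|\hat\lambda_K(m)-\lambda(m)|^\gamma\big]\le CK^{-\gamma d/2}.$$
   Context: $\alpha=(\alpha_x)_{x\in\mathbb{Z}^d}$ is a stationary random field (expectation $\mathbb{E}$) with $|\alpha_x|\le B<\infty$, satisfying the mixing condition: there exist $\gamma\ge\max\{4,2(d+2)/d^2\}$ and $C<\infty$ such that for all positive integers $l,K$ and every function $f$ of $(\alpha_x)_{x\in\Lambda_l}$ with $\mathbb{E}[f]=0$, $\mathbb{E}[|K^{-d}\sum_{x\in\Lambda_K}\tau_xf|^\gamma]\le C(l/K)^{\gamma d/2}\mathbb{E}[|f|^\gamma]$, where $\Lambda_n$ is a box of side length $n$ and $(\tau_x\alpha)_y=\alpha_{x+y}$, $\tau_xf(\alpha)=f(\tau_x\alpha)$; $\gamma$ in the claim is this exponent. The annealed chemical potential $\lambda(m)$ is defined by $\mathbb{E}[e^{\alpha_0+\lambda}/(1+e^{\alpha_0+\lambda})]=m$, and the empirical chemical potential $\hat\lambda_K(m)$ on $\Lambda_K$ is defined by $m=K^{-d}\sum_{x\in\Lambda_K}e^{\hat\lambda_K+\alpha_x}/(1+e^{\hat\lambda_K+\alpha_x})$. *)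

From HB Require Import structures.
From mathcomp Require Import all_boot all_order all_algebra.
From mathcomp Require Import all_classical all_reals all_analysis.
Set Implicit Arguments.
Unset Strict Implicit.
Unset Printing Implicit Defensive.
Import Order.TTheory GRing.Theory Num.Theory.
Local Open Scope classical_set_scope.
Local Open Scope ring_scope.

Definition site (d : nat) := 'rV[int]_d.

(* Point of the box Lambda_n = {0,...,n-1}^d indexed by t. *)
Definition boxpt (d n : nat) (t : {ffun 'I_d -> 'I_n}) : site d :=
  \row_i ((t i : nat)%:Z).

Definition in_box (d n : nat) (x : site d) : Prop :=
  exists t : {ffun 'I_d -> 'I_n}, x = boxpt t.

Definition conf (R : realType) (T : Type) (d : nat)
  (alpha : site d -> T -> R) (w : T) : site d -> R := fun x => alpha x w.

Definition tau_shift (R : realType) (d : nat) (x : site d) (c : site d -> R)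
  : site d -> R := fun y => c (x + y).

Definition cyl_sets (R : realType) (d l : nat) : set (set (site d -> R)) :=
  fun S => exists (x : site d) (A : set R),
    in_box l x /\ measurable A /\ S = (fun c => c x) @^-1` A.

(* f is a (Borel) function of (c_x)_{x in Lambda_l} *)
Definition local_fun (R : realType) (d l : nat) (f : (site d -> R) -> R) :=
  forall B : set R, measurable B -> <<s @cyl_sets R d l >> (f @^-1` B).

Definition stationary (R : realType) (dT : measure_display)
  (T : measurableType dT) (P : probability T R) (d : nat)
  (alpha : site d -> T -> R) : Prop :=
  forall (n : nat) (xs : 'I_n -> site d) (A : 'I_n -> set R) (y : site d),
    (forall i, measurable (A i)) ->
    P [set w | forall i, A i (alpha (xs i) w)] =
    P [set w | forall i, A i (alpha (y + xs i) w)].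

Definition fermi (R : realType) (t : R) : R := expR t / (1 + expR t).

(** The annealed and the empirical chemical potential both lie within [B] of
    [logit m], because the Fermi function is increasing and [|alpha| <= B].
    On the window of radius [2B] around [logit m] the inverse of the Fermi
    function is Lipschitz with constant [e^(6B) / (m (1 - m))], so
    [|lamhat - lambda|] is at most this constant times the box average of the
    centered local observable [fermi (alpha_0 + lambda) - m]. After scaling,
    this observable is bounded by [e^(8B)] uniformly in [m], since
    [|fermi z - m| <= e^(2B) m (1 - m)] on the window; the mixing condition
    with [l = 1] then gives the bound. *)

From HB Require Import structures.
From mathcomp Require Import all_boot all_order all_algebra.
From mathcomp Require Import all_classical all_reals all_analysis.
From mathcomp Require Import ring lra.

Set Implicit Arguments.
Unset Strict Implicit.
Unset Printing Implicit Defensive.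
Import Order.TTheory GRing.Theory Num.Theory numFieldNormedType.Exports.
Local Open Scope classical_set_scope.
Local Open Scope ring_scope.

Section fermi.
Variable R : realType.
Implicit Types x y z a c k m : R.

Lemma fermi_ge0 z : 0 <= fermi z.
Proof. by rewrite divr_ge0 ?addr_ge0 ?expR_ge0. Qed.

Lemma fermi_le1 z : fermi z <= 1.
Proof. by rewrite ler_pdivrMr ?mul1r ?lerDr ?ltr_pwDl ?expR_ge0. Qed.

Lemma fermiB x y :
  fermi x - fermi y = (expR x - expR y) / ((1 + expR x) * (1 + expR y)).
Proof.
have ex := expR_gt0 x; have ey := expR_gt0 y.
by rewrite /fermi; field; rewrite !gt_eqF // ltr_pwDl.
Qed.

Lemma ler_fermi : {mono @fermi R : x y / x <= y}.
Proof.
move=> x y; have ex := expR_gt0 x; have ey := expR_gt0 y.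
by rewrite -subr_ge0 fermiB pmulr_lge0 ?subr_ge0 ?ler_expR // invr_gt0 mulr_gt0 // ltr_pwDl.
Qed.

Lemma continuous_fermi : continuous (@fermi R).
Proof.
move=> x; apply: cvgM; first exact: continuous_expR.
apply: cvgV; first by rewrite gt_eqF // ltr_pwDl // expR_ge0.
by apply: cvgD; [exact: cvg_cst | exact: continuous_expR].
Qed.

Lemma measurable_fermi : measurable_fun setT (@fermi R).
Proof. exact: measurable_realfun.continuous_measurable_fun continuous_fermi. Qed.

Lemma measurable_fermi_centered k a m :
  measurable_fun setT (fun x => k * (fermi (x + a) - m)).
Proof.
apply: measurable_realfun.measurable_funM => //.
apply: measurable_realfun.measurable_funB => //.
apply: measurableT_comp measurable_fermi _.
exact: measurable_realfun.measurable_funD.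
Qed.

Lemma lerB_expR x y : (x - y) * expR y <= expR x - expR y.
Proof.
have := expR_ge1Dx (x - y); rewrite expRB => h.
have ey := expR_gt0 y.
by rewrite -(ler_pM2r ey) mulrDl mul1r divfK ?gt_eqF // in h; lra.
Qed.

Definition odds m : R := m / (1 - m).

Lemma odds_gt0 m : 0 < m < 1 -> 0 < odds m.
Proof. by case/andP=> m0 m1; rewrite divr_gt0 // subr_gt0. Qed.

Lemma mulr1Br_odds m : m < 1 -> m * (1 - m) = odds m / (1 + odds m) ^+ 2.
Proof. by move=> m1; rewrite /odds; field; rewrite subr_eq0 gt_eqF // subrK oner_eq0. Qed.

Definition logit m : R := ln (odds m).

Lemma expR_logit m : 0 < m < 1 -> expR (logit m) = odds m.
Proof. by move=> m01; rewrite lnK // posrE odds_gt0. Qed.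

Lemma fermi_logit m : 0 < m < 1 -> fermi (logit m) = m.
Proof.
move=> m01; have /andP[m0 m1] := m01.
rewrite /fermi expR_logit // /odds; field.
by rewrite subrK oner_eq0 andbT subr_eq0 gt_eqF.
Qed.

Lemma logit_near a c m : 0 < m < 1 -> fermi (a - c) <= m <= fermi (a + c) ->
  `|a - logit m| <= c.
Proof.
move=> m01; rewrite -{1 2}(fermi_logit m01) !ler_fermi ler_norml.
by case/andP=> h1 h2; apply/andP; split; lra.
Qed.

Lemma expR_near_logit z c m : 0 < m < 1 -> `|z - logit m| <= c ->
  odds m / expR c <= expR z <= odds m * expR c.
Proof.
move=> m01; rewrite ler_norml => /andP[lo hi].
have r0 := odds_gt0 m01.
rewrite -[z](subrK (logit m)) expRD expR_logit //.
set r := odds m in r0 *.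
rewrite (mulrC _ r) ler_pdivrMr ?expR_gt0 // -mulrA -expRD -{1}[r]mulr1 !ler_pM2l //.
by rewrite -expR0 !ler_expR; apply/andP; split; lra.
Qed.

Lemma fermi_near_logit z c m : 0 < m < 1 -> `|z - logit m| <= c ->
  `|fermi z - m| <= expR c * (m * (1 - m)).
Proof.
move=> m01 zc; have /andP[_ m1] := m01.
have E1 : 1 <= expR c by rewrite -expR0 ler_expR (le_trans (normr_ge0 _) zc).
rewrite -{1}(fermi_logit m01) fermiB expR_logit //.
have := expR_near_logit m01 zc.
rewrite mulr1Br_odds //; have r0 := odds_gt0 m01.
set r := odds m in r0 *; set V := expR z; set E := expR c.
rewrite ler_pdivrMr ?expR_gt0 // => /andP[Vlo Vhi].
have V0 : 0 < V := expR_gt0 z.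
have key : `|V - r| * (1 + r) <= E * r * (1 + V).
  have rV0 : 0 <= r * V by rewrite mulr_ge0 ?ltW.
  have : 0 <= r * (V * E - r) by rewrite pmulr_rge0 // subr_ge0.
  case: (lerP r V) => rV; nra.
have r1 : 0 < 1 + r by rewrite ltr_pwDl ?ltW.
have V1 : 0 < 1 + V by rewrite ltr_pwDl ?ltW.
rewrite normrM [`|_^-1|]gtr0_norm ?invr_gt0 ?mulr_gt0 // ler_pdivrMr ?mulr_gt0 //.
have -> : E * (r / (1 + r) ^+ 2) * ((1 + V) * (1 + r)) = E * r * (1 + V) / (1 + r).
  by field; rewrite gt_eqF.
by rewrite ler_pdivlMr.
Qed.

Definition logit_lip c m : R := expR c ^+ 3 / (m * (1 - m)).

Lemma logit_lip_ge0 c m : 0 < m < 1 -> 0 <= logit_lip c m.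
Proof.
by case/andP=> m0 m1; rewrite divr_ge0 ?exprn_ge0 ?expR_ge0 // mulr_ge0 ?subr_ge0 ?ltW.
Qed.

Lemma logit_lip_fermi_near_logit z c m : 0 < m < 1 -> `|z - logit m| <= c ->
  `|logit_lip c m * (fermi z - m)| <= expR c ^+ 4.
Proof.
move=> m01 zc; have /andP[m0 m1] := m01.
rewrite normrM (ger0_norm (logit_lip_ge0 c m01)).
apply: le_trans (ler_wpM2l (logit_lip_ge0 c m01) (fermi_near_logit m01 zc)) _.
rewrite le_eqVlt; apply/orP; left; apply/eqP.
by rewrite /logit_lip exprSr; field; rewrite !gt_eqF ?subr_gt0.
Qed.

Lemma fermi_inverse_lipschitz x y c m : 0 < m < 1 ->
  `|x - logit m| <= c -> `|y - logit m| <= c -> y <= x ->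
  x - y <= logit_lip c m * (fermi x - fermi y).
Proof.
move=> m01 xc yc yx; have /andP[_ m1] := m01.
have E1 : 1 <= expR c by rewrite -expR0 ler_expR (le_trans (normr_ge0 _) xc).
have /andP[_ Xhi] := expR_near_logit m01 xc.
have /andP[Ylo Yhi] := expR_near_logit m01 yc.
have XY := lerB_expR x y.
rewrite /logit_lip mulr1Br_odds // fermiB; have r0 := odds_gt0 m01.
set r := odds m in r0 Xhi Ylo Yhi *.
set X := expR x in Xhi XY *; set Y := expR y in Ylo Yhi XY *.
set E := expR c in E1 Xhi Ylo Yhi *.
have X0 : 0 < X := expR_gt0 x; have Y0 : 0 < Y := expR_gt0 y.
have xy0 : 0 <= x - y by rewrite subr_ge0.
have XY0 : 0 <= X - Y := le_trans (mulr_ge0 xy0 (ltW Y0)) XY.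
have XYr : (1 + X) * (1 + Y) <= E ^+ 2 * (1 + r) ^+ 2.
  by rewrite -exprMn expr2; apply: ler_pM; lra.
have rY : r <= E * Y by rewrite mulrC -ler_pdivrMr ?expR_gt0.
have xyr : (x - y) * r <= E * (X - Y).
  have := ler_wpM2l xy0 rY; have := ler_wpM2l (ltW (lt_le_trans ltr01 E1)) XY.
  lra.
have r1 : 0 < 1 + r by rewrite ltr_pwDl ?ltW.
have XY1 : 0 < (1 + X) * (1 + Y) by rewrite mulr_gt0 // ltr_pwDl ?ltW.
have -> : E ^+ 3 / (r / (1 + r) ^+ 2) * ((X - Y) / ((1 + X) * (1 + Y)))
    = E * (X - Y) * (E ^+ 2 * (1 + r) ^+ 2) / (r * ((1 + X) * (1 + Y))).
  by field; rewrite !gt_eqF // ltr_pwDl ?ltW.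
rewrite ler_pdivlMr; last exact: mulr_gt0.
have := ler_pM (mulr_ge0 xy0 (ltW r0)) (ltW XY1) xyr XYr; lra.
Qed.

End fermi.

Section mean.
Variables (R : numFieldType) (I : finType).
Implicit Types (a b : I -> R) (c k : R).

Definition mean a : R := #|I|%:R^-1 * \sum_i a i.

Lemma mean_cst c : (0 < #|I|)%N -> mean (fun=> c) = c.
Proof.
move=> I0; rewrite /mean sumr_const -[c *+ _]mulr_natl mulrA.
by rewrite mulVf ?mul1r // pnatr_eq0 -lt0n.
Qed.

Lemma ler_mean a b : (forall i, a i <= b i) -> mean a <= mean b.
Proof. by move=> ab; rewrite ler_wpM2l ?invr_ge0 // ler_sum. Qed.

Lemma meanB a b : mean (fun i => a i - b i) = mean a - mean b.
Proof. by rewrite /mean sumrB mulrBr. Qed.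

Lemma meanZ k a : mean (fun i => k * a i) = k * mean a.
Proof. by rewrite /mean -mulr_sumr mulrCA. Qed.

End mean.

Lemma mean_ffunE (R : numFieldType) d K (a : {ffun 'I_d -> 'I_K} -> R) :
  (K%:R ^+ d)^-1 * \sum_t a t = mean a.
Proof. by rewrite /mean card_ffun !card_ord natrX. Qed.

Section mean_fermi.
Variables (R : realType) (I : finType).
Implicit Types (s : I -> R) (a b c m : R).

Lemma logit_near_mean s a c m : (0 < #|I|)%N -> 0 < m < 1 ->
  (forall i, `|s i| <= c) -> mean (fun i => fermi (s i + a)) = m ->
  `|a - logit m| <= c.
Proof.
move=> I0 m01 sc sm; apply: logit_near => //; rewrite -sm.
rewrite -(mean_cst (fermi (a - c)) I0) -(mean_cst (fermi (a + c)) I0).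
by apply/andP; split; apply: ler_mean => i; rewrite ler_fermi;
  have := sc i; rewrite ler_norml; lra.
Qed.

Lemma dist_le_mean_fermi s a b c m : (0 < #|I|)%N -> 0 < m < 1 ->
  (forall i, `|s i + a - logit m| <= c) -> (forall i, `|s i + b - logit m| <= c) ->
  `|a - b| <= logit_lip c m *
    `|mean (fun i => fermi (s i + a)) - mean (fun i => fermi (s i + b))|.
Proof.
move=> I0 m01; wlog ba : a b / b <= a => [wlog_ba ha hb|ha hb].
  have [ba|ab] := leP b a; first exact: wlog_ba.
  by rewrite distrC [X in _ * X]distrC; apply: wlog_ba => //; apply: ltW.
have L0 := logit_lip_ge0 c m01.
rewrite ger0_norm ?subr_ge0 // -meanB.
apply: le_trans (ler_wpM2l L0 (ler_norm _)).
rewrite -meanZ -(mean_cst (a - b) I0); apply: ler_mean => i.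
have -> : a - b = s i + a - (s i + b) by ring.
by apply: fermi_inverse_lipschitz; rewrite ?lerD2l.
Qed.

End mean_fermi.

Section integral.
Local Open Scope ereal_scope.
Context (R : realType) (dT : measure_display) (T : measurableType dT).

(* Needed because [lamhat] is not assumed measurable. *)
Lemma ge0_le_integral_nonmeasurable (mu : {measure set T -> \bar R})
    (f g : T -> \bar R) :
  (forall x, 0 <= f x) -> (forall x, f x <= g x) ->
  \int[mu]_x f x <= \int[mu]_x g x.
Proof.
move=> f0 fg; have g0 x : 0 <= g x := le_trans (f0 x) (fg x).
rewrite !ge0_integralTE //; apply: ereal_sup_le => _ [h hf <-].
by exists h => //= x; exact: le_trans (hf x) (fg x).
Qed.

Variable P : probability T R.

Lemma integral_prob_cst (c : R) : \int[P]_w c%:E = c%:E.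
Proof. by rewrite integral_cst //= probability_setT mule1. Qed.

Lemma integral_prob_bounds (h : T -> R) (a b : R) : (0 <= a)%R ->
  (forall w, a <= h w <= b)%R ->
  a%:E <= \int[P]_w (h w)%:E <= b%:E.
Proof.
move=> a0 hab; have h0 w : (0 <= h w)%R by case/andP: (hab w) => /(le_trans a0).
rewrite -{1}(integral_prob_cst a) -(integral_prob_cst b).
apply/andP; split; apply: ge0_le_integral_nonmeasurable => w;
  by rewrite lee_fin //; case/andP: (hab w).
Qed.

Lemma integrable_prob_bounded (h : T -> R) (c : R) : measurable_fun setT h ->
  (forall w, `|h w| <= c)%R -> P.-integrable setT (EFin \o h).
Proof.
move=> mh hc; apply: measurable_bounded_integrable => //.
  exact: fin_num_fun_lty.
by exists c; split => [|x cx w _]; [exact: num_real | exact: le_trans (hc w) (ltW cx)].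
Qed.

Lemma logit_near_integral (s : T -> R) a c m : (0 < m < 1)%R ->
  (forall w, `|s w| <= c)%R -> \int[P]_w (fermi (s w + a))%:E = m%:E ->
  (`|a - logit m| <= c)%R.
Proof.
move=> m01 sc Im; apply: logit_near => //.
have := @integral_prob_bounds (fun w => fermi (s w + a)) _ _ (fermi_ge0 (a - c)).
rewrite Im !lee_fin; apply => w.
by rewrite !ler_fermi; have := sc w; rewrite ler_norml; lra.
Qed.

Lemma integral_fermi_centered (s : T -> R) k a m : measurable_fun setT s ->
  \int[P]_w (fermi (s w + a))%:E = m%:E ->
  \int[P]_w (k * (fermi (s w + a) - m))%:E = 0.
Proof.
move=> ms Im.
have int_fermi : P.-integrable setT (fun w => (fermi (s w + a))%:E).
  apply: (integrable_prob_bounded (c := 1)).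
    apply: (measurableT_comp (@measurable_fermi R)).
    exact: measurable_realfun.measurable_funD.
  by move=> w; rewrite ger0_norm ?fermi_ge0 ?fermi_le1.
have int_cst := finite_measure_integrable_cst P m measurableT.
under eq_integral do rewrite EFinM EFinB.
rewrite integralZl //; last exact: integrableB.
by rewrite integralB // Im integral_prob_cst subee // mule0.
Qed.

End integral.

Lemma local_fun_at0 (R : realType) d (g : R -> R) :
  measurable_fun setT g -> @local_fun R d 1 (fun c => g (c 0)).
Proof.
move=> mg A mA; apply: sub_gen_smallest; exists 0, (g @^-1` A); split.
  by exists [ffun=> ord0]; apply/rowP => i; rewrite !mxE ffunE.
by split => //; rewrite -[_ @^-1` _]setTI; exact: mg.
Qed.

Definition mixing_condition (R : realType) (dT : measure_display)
    (T : measurableType dT) (P : probability T R) (d : nat)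
    (alpha : site d -> T -> R) (gamma Cmix : R) : Prop :=
  forall (l K : nat) (f : (site d -> R) -> R), (0 < l)%N -> (0 < K)%N ->
     @local_fun R d l f ->
     P.-integrable setT (fun w => (f (conf alpha w))%:E) ->
     (\int[P]_w (f (conf alpha w))%:E = 0)%E ->
     (\int[P]_w ((`|f (conf alpha w)| `^ gamma)%:E) < +oo)%E ->
     (\int[P]_w ((`| (K%:R ^+ d)^-1 *
          \sum_(t : {ffun 'I_d -> 'I_K}) f (tau_shift (boxpt t) (conf alpha w)) |
          `^ gamma)%:E)
      <= (Cmix * (l%:R / K%:R) `^ (gamma * d%:R / 2))%:E *
         \int[P]_w ((`|f (conf alpha w)| `^ gamma)%:E))%E.

Section mixing.
Context (R : realType) (dT : measure_display) (T : measurableType dT).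
Variables (P : probability T R) (d : nat) (alpha : site d -> T -> R).
Variables (gamma Cmix : R).
Hypothesis mixing : mixing_condition P alpha gamma Cmix.

Lemma mixing_mean_site0 (g : R -> R) (K : nat) : (0 < K)%N ->
  measurable_fun setT g -> P.-integrable setT (fun w => (g (alpha 0 w))%:E) ->
  (\int[P]_w (g (alpha 0 w))%:E = 0)%E ->
  (\int[P]_w ((`|g (alpha 0 w)| `^ gamma)%:E) < +oo)%E ->
  (\int[P]_w ((`|mean (fun t : {ffun 'I_d -> 'I_K} => g (alpha (boxpt t) w))|
      `^ gamma)%:E)
   <= (Cmix * K%:R `^ (- (gamma * d%:R / 2)))%:E *
      \int[P]_w ((`|g (alpha 0 w)| `^ gamma)%:E))%E.
Proof.
move=> K0 mg int_g g0 fin_g.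
have meanE w : (K%:R ^+ d)^-1 * \sum_(t : {ffun 'I_d -> 'I_K})
      (fun c => g (c 0)) (tau_shift (boxpt t) (conf alpha w))
    = mean (fun t : {ffun 'I_d -> 'I_K} => g (alpha (boxpt t) w)).
  by rewrite -mean_ffunE /tau_shift /conf; under eq_bigr do rewrite addr0.
have := @mixing 1 K (fun c => g (c 0)) isT K0 (local_fun_at0 mg) int_g g0 fin_g.
under eq_integral => w _ do rewrite meanE.
by rewrite div1r -powR_inv1 ?ler0n // -powRrM mulN1r.
Qed.

Hypotheses (malpha0 : measurable_fun setT (alpha 0)) (gamma0 : 0 <= gamma).

Lemma mixing_mean_bounded (g : R -> R) (Q : R) (K : nat) : (0 < K)%N ->
  measurable_fun setT g -> (forall w, `|g (alpha 0 w)| <= Q) ->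
  (\int[P]_w (g (alpha 0 w))%:E = 0)%E ->
  (\int[P]_w ((`|mean (fun t : {ffun 'I_d -> 'I_K} => g (alpha (boxpt t) w))|
      `^ gamma)%:E)
   <= (Num.max Cmix 0 * Q `^ gamma * K%:R `^ (- (gamma * d%:R / 2)))%:E)%E.
Proof.
move=> K0 mg gQ g0.
have mga : measurable_fun setT (fun w => g (alpha 0 w)) := measurableT_comp mg malpha0.
have /andP[Ig0 IgQ] : (0%:E <= \int[P]_w (`|g (alpha 0 w)| `^ gamma)%:E
                       <= (Q `^ gamma)%:E)%E.
  apply: integral_prob_bounds => // w; rewrite powR_ge0 ge0_ler_powR ?nnegrE //.
  exact: le_trans (normr_ge0 _) (gQ w).
apply: le_trans (mixing_mean_site0 K0 mg (integrable_prob_bounded P mga gQ) g0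
  (le_lt_trans IgQ (ltry _))) _.
set X := K%:R `^ _; have X0 : 0 <= X := powR_ge0 _ _.
have M0 : 0 <= Num.max Cmix 0 by rewrite le_max lexx orbT.
apply: le_trans (lee_wpmul2r Ig0 (_ : ((Cmix * X)%:E <= (Num.max Cmix 0 * X)%:E)%E)) _.
  by rewrite lee_fin ler_wpM2r // le_max lexx.
apply: le_trans (lee_wpmul2l _ IgQ) _; first by rewrite lee_fin mulr_ge0.
by rewrite -EFinM mulrAC.
Qed.

End mixing.

Theorem lemma10p3 (R : realType) (dT : measure_display) (T : measurableType dT)
  (P : probability T R) (d : nat) (alpha : site d -> T -> R) (B gamma Cmix : R)
  (lambda : R -> R) (lamhat : nat -> R -> T -> R) :
  (0 < d)%N ->
  (forall x, measurable_fun setT (alpha x)) ->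
  stationary P alpha ->
  (forall x w, `|alpha x w| <= B) ->
  4 <= gamma -> 2 * (d%:R + 2) / (d%:R ^+ 2) <= gamma ->
  (* mixing condition *)
  (forall (l K : nat) (f : (site d -> R) -> R), (0 < l)%N -> (0 < K)%N ->
     @local_fun R d l f ->
     P.-integrable setT (fun w => (f (conf alpha w))%:E) ->
     (\int[P]_w (f (conf alpha w))%:E = 0)%E ->
     (\int[P]_w ((`|f (conf alpha w)| `^ gamma)%:E) < +oo)%E ->
     (\int[P]_w ((`| (K%:R ^+ d)^-1 *
          \sum_(t : {ffun 'I_d -> 'I_K}) f (tau_shift (boxpt t) (conf alpha w)) |
          `^ gamma)%:E)
      <= (Cmix * (l%:R / K%:R) `^ (gamma * d%:R / 2))%:E *
         \int[P]_w ((`|f (conf alpha w)| `^ gamma)%:E))%E) ->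
  (* annealed chemical potential *)
  (forall m, 0 < m < 1 ->
     (\int[P]_w (fermi (alpha 0 w + lambda m))%:E = m%:E)%E) ->
  (* empirical chemical potential *)
  (forall (K : nat) m w, (0 < K)%N -> 0 < m < 1 ->
     m = (K%:R ^+ d)^-1 *
         \sum_(t : {ffun 'I_d -> 'I_K}) fermi (lamhat K m w + alpha (boxpt t) w)) ->
  exists C : R, forall (K : nat) m, (0 < K)%N -> 0 < m < 1 ->
    (\int[P]_w ((`|lamhat K m w - lambda m| `^ gamma)%:E)
      <= (C * K%:R `^ (- (gamma * d%:R / 2)))%:E)%E.
Proof.
move=> _ malpha _ alphaB gamma4 _ mix ann emp.
exists (Num.max Cmix 0 * (expR (B + B) ^+ 4) `^ gamma) => K m K0 m01.
have box0 : (0 < #|{ffun 'I_d -> 'I_K}|)%N by rewrite card_ffun !card_ord expn_gt0 K0.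
set lam := lambda m; set L := logit_lip (B + B) m.
have mean_hat w :
    mean (fun t : {ffun 'I_d -> 'I_K} => fermi (alpha (boxpt t) w + lamhat K m w)) = m.
  by rewrite [in RHS](emp K m w K0 m01) mean_ffunE /mean; under eq_bigr do rewrite addrC.
have lam_near : `|lam - logit m| <= B := logit_near_integral m01 (alphaB 0) (ann m m01).
have hat_near w : `|lamhat K m w - logit m| <= B.
  exact: logit_near_mean box0 m01 (fun t => alphaB (boxpt t) w) (mean_hat w).
have in_window a x w : `|a - logit m| <= B -> `|alpha x w + a - logit m| <= B + B.
  by move=> aB; rewrite -addrA addrC; apply: le_trans (ler_normD _ _) (lerD aB (alphaB x w)).
pose g x := L * (fermi (x + lam) - m).
have g_bound w : `|g (alpha 0 w)| <= expR (B + B) ^+ 4.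
  exact: logit_lip_fermi_near_logit m01 (in_window _ 0 w lam_near).
have g_mean0 : (\int[P]_w (g (alpha 0 w))%:E = 0)%E.
  exact: integral_fermi_centered (malpha 0) (ann m m01).
have pointwise w :
    `|lamhat K m w - lam| <= `|mean (fun t : {ffun 'I_d -> 'I_K} => g (alpha (boxpt t) w))|.
  have := dist_le_mean_fermi box0 m01 (fun t => in_window _ (boxpt t) w (hat_near w))
    (fun t => in_window _ (boxpt t) w lam_near).
  rewrite mean_hat /g meanZ meanB mean_cst // normrM.
  by rewrite (ger0_norm (logit_lip_ge0 _ m01)) [X in _ * X]distrC.
apply: le_trans (mixing_mean_bounded mix (malpha 0) _ K0 (measurable_fermi_centered _ _ _)
  g_bound g_mean0); last lra.
apply: ge0_le_integral_nonmeasurable => w; rewrite lee_fin ?powR_ge0 //.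
by rewrite ge0_ler_powR ?nnegrE //; lra.
Qed.
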